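(* Let $\mathcal H$ be the $5$-uniform hypergraph defined below, let $e,f$ be two edges of $\mathcal H$, and let $\phi : V(\mathcal{H}_{ef}) \to V(\mathcal{H})$ be a monomorphism. If $b, e_5 \in \mathcal{H}_{ef}$, then $\phi(v_9) = v_9$.
   Context: $\mathcal{H}$ has vertex set $\{z, v_1,\dots,v_9\}$ and edges $r=\{z,v_1,v_3,v_5,v_8\}$, $g=\{z,v_2,v_4,v_7,v_9\}$, $a=\{v_1,v_4,v_6,v_8,v_9\}$, $b=\{v_9,v_1,v_2,v_3,v_4\}$, and $e_i=\{v_i,v_{i+1},v_{i+2},v_{i+3},v_{i+4}\}$ for $i=1,\dots,5$. $\mathcal{H}_{ef}$ is the hypergraph with edge set $E(\mathcal H)\setminus\{e,f\}$, and $V(\mathcal H_{ef})$ is the union of its edges. A monomorphism $\phi: V(\mathcal{H}_{ef})\to V(\mathcal{H})$ is an injective map such that $\{\phi(y): y\in x\}$ is an edge of $\mathcal H$ for every edge $x$ of $\mathcal H_{ef}$. *)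

(* Vertices z, v_1, ..., v_9 are encoded as 'I_10 with
   z = 0 and v_i = i. *)
From mathcomp Require Import all_boot.
Set Implicit Arguments. Unset Strict Implicit. Unset Printing Implicit Defensive.

Definition vert := 'I_10.
Definition vx (i : nat) : vert := inord i.
Definition z : vert := vx 0.

Definition edge_of (l : seq nat) : {set vert} := [set x : vert | val x \in l].

Definition r_edge  := edge_of [:: 0; 1; 3; 5; 8].
Definition g_edge  := edge_of [:: 0; 2; 4; 7; 9].
Definition a_edge  := edge_of [:: 1; 4; 6; 8; 9].
Definition b_edge  := edge_of [:: 9; 1; 2; 3; 4].
Definition e_edge (i : nat) := edge_of [:: i; i+1; i+2; i+3; i+4].

Definition H_edges : seq {set vert} :=
  [:: r_edge; g_edge; a_edge; b_edge;
      e_edge 1; e_edge 2; e_edge 3; e_edge 4; e_edge 5].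

Definition Hef_edges (e f : {set vert}) : seq {set vert} :=
  [seq x <- H_edges | (x != e) && (x != f)].

Definition Hef_vertices (e f : {set vert}) : {set vert} :=
  \bigcup_(x <- Hef_edges e f) x.

(* phi : V(H_ef) -> V(H) is a monomorphism (only its values on V(H_ef) matter) *)
Definition monomorphism (e f : {set vert}) (phi : vert -> vert) : Prop :=
  {in Hef_vertices e f &, injective phi} /\
  (forall x, x \in Hef_edges e f -> phi @: x \in H_edges).

(* A monomorphism is injective on V(H_ef), so it preserves the sizes of
   pairwise intersections of edges and induces an edge map from H_ef to H with
   the same intersection pattern.  Moreover phi(v) lies exactly in the images
   of the edges containing v.  Enumerating, for every admissible pair {e, f},
   all intersection-preserving edge maps shows that these constraints leave
   v_9 as the only possible image of v_9, except for one spurious edge map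
   (when e_2 and e_4 are removed) under which some vertex has no possible
   image at all. *)
From mathcomp Require Import all_boot.
Set Implicit Arguments. Unset Strict Implicit. Unset Printing Implicit Defensive.

Lemma all2_mapl (T U : Type) (r : T -> U -> bool) (F : U -> T) (s : seq U) :
  all2 r (map F s) s = all (fun x => r (F x) x) s.
Proof. by elim: s => //= x s ->. Qed.

Section InjectiveImage.
Variables (T U : finType) (phi : T -> U) (V : {set T}).
Hypothesis phi_inj : {in V &, injective phi}.

Lemma card_imsetI_in (A B : {set T}) :
  A \subset V -> B \subset V -> #|phi @: A :&: phi @: B| = #|A :&: B|.
Proof.
move=> /subsetP AV /subsetP BV.
rewrite -imsetI; last by move=> x y /AV xV /BV yV; apply: phi_inj.
by apply: card_in_imset => x y /setIP[/AV xV _] /setIP[/AV yV _]; apply: phi_inj.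
Qed.

Lemma mem_imset_in (A : {set T}) v :
  A \subset V -> v \in V -> (phi v \in phi @: A) = (v \in A).
Proof.
move=> /subsetP AV vV; apply/imsetP/idP => [[u uA /phi_inj eq_vu] | vA].
  by rewrite eq_vu // AV.
by exists v.
Qed.

End InjectiveImage.

Section Assignments.
Variables (A : eqType) (meet : A -> A -> nat) (E : seq A).

Definition pattern_ok (y x : A) (s L : seq A) :=
  all2 (fun y' x' => meet y y' == meet x x') (y :: s) (x :: L).

Fixpoint assignments (L : seq A) : seq (seq A) :=
  if L is x :: L' then
    [seq y :: s | s <- assignments L', y <- [seq y <- E | pattern_ok y x s L']]
  else [:: [::]].

Lemma assignments_complete (F : A -> A) (L : seq A) :
  {in L, forall x, F x \in E} ->
  {in L &, forall x x', meet (F x) (F x') = meet x x'} ->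
  map F L \in assignments L.
Proof.
elim: L => [|x L IHL] FE Fmeet /=; first by rewrite mem_seq1.
have FE' : {in L, forall x, F x \in E} by move=> y yL; rewrite FE // inE yL orbT.
have Fmeet' : {in L &, forall y y', meet (F y) (F y') = meet y y'}.
  by move=> y y' yL y'L; rewrite Fmeet // inE ?yL ?y'L orbT.
apply/allpairsPdep; exists (map F L), (F x); split=> //; first exact: IHL FE' Fmeet'.
rewrite mem_filter FE ?mem_head // andbT /pattern_ok /= Fmeet ?mem_head // eqxx.
by rewrite all2_mapl; apply/allP => y yL; rewrite Fmeet // inE ?yL ?eqxx ?orbT.
Qed.

End Assignments.

Definition edge_lists : seq (seq nat) :=
  [:: [:: 0; 1; 3; 5; 8]; [:: 0; 2; 4; 7; 9]; [:: 1; 4; 6; 8; 9];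
      [:: 9; 1; 2; 3; 4]; [:: 1; 2; 3; 4; 5]; [:: 2; 3; 4; 5; 6];
      [:: 3; 4; 5; 6; 7]; [:: 4; 5; 6; 7; 8]; [:: 5; 6; 7; 8; 9]].

Lemma H_edgesE : H_edges = map edge_of edge_lists.
Proof. by []. Qed.

Lemma edge_lists_lt10 : all (all (fun i => i < 10)) edge_lists.
Proof. by []. Qed.

Definition same_edge (l1 l2 : seq nat) :=
  all (fun i => (i \in l1) == (i \in l2)) (iota 0 10).

Definition meet_size (l1 l2 : seq nat) :=
  count (fun i => (i \in l1) && (i \in l2)) (iota 0 10).

Lemma mem_edge_of l i : i < 10 -> ((inord i : vert) \in edge_of l) = (i \in l).
Proof. by move=> lt_i10; rewrite inE /= inordK. Qed.

Lemma eq_edge_of l1 l2 : (edge_of l1 == edge_of l2) = same_edge l1 l2.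
Proof.
apply/eqP/allP => [eq_l12 i | same_l12].
  rewrite mem_iota => /andP[_ lt_i10].
  by rewrite -!(mem_edge_of _ lt_i10) eq_l12.
apply/setP => x; rewrite !inE; apply/eqP/same_l12.
by rewrite mem_iota ltn_ord.
Qed.

Lemma mem_map_edge_of l L : (edge_of l \in map edge_of L) = has (same_edge l) L.
Proof. by elim: L => //= l' L IHL; rewrite in_cons eq_edge_of IHL. Qed.

Lemma card_edge_ofI l1 l2 : #|edge_of l1 :&: edge_of l2| = meet_size l1 l2.
Proof.
rewrite /meet_size -sum1_card -sum1_count -[iota 0 10]/(index_iota 0 10) big_mkord.
by apply: eq_bigl => i; rewrite !inE.
Qed.

Definition idx_map (phi : vert -> vert) (i : nat) : nat := val (phi (inord i)).

Lemma imset_edge_of phi l :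
  all (fun i => i < 10) l -> phi @: edge_of l = edge_of (map (idx_map phi) l).
Proof.
move=> /allP l_lt10; apply/setP => y; rewrite [in RHS]inE.
apply/imsetP/mapP => [[x x_l ->] | [i i_l /val_inj ->]].
  by exists (val x); [rewrite inE in x_l | rewrite /idx_map inord_val].
by exists (inord i); rewrite ?mem_edge_of ?l_lt10.
Qed.

Definition edge_rep (l : seq nat) := head l [seq h <- edge_lists | same_edge l h].

Lemma edge_repP l :
  edge_of l \in H_edges -> edge_rep l \in edge_lists /\ edge_of (edge_rep l) = edge_of l.
Proof.
rewrite H_edgesE mem_map_edge_of has_filter /edge_rep.
case reps: [seq h <- _ | _] => [|h t] //= _.
have : h \in [seq h <- edge_lists | same_edge l h] by rewrite reps mem_head.
by rewrite mem_filter -eq_edge_of => /andP[/eqP-> ->].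
Qed.

Lemma sub_Hef_vertices e f x : x \in Hef_edges e f -> x \subset Hef_vertices e f.
Proof. by move=> x_Hef; rewrite /Hef_vertices (big_rem x) //= subsetUl. Qed.

Definition image_edge (phi : vert -> vert) (x : seq nat) :=
  edge_rep (map (idx_map phi) x).

(* The possible images of [v] under a monomorphism inducing the edge map [L_i |-> s_i]. *)
Definition candidates (s L : seq (seq nat)) (v : nat) :=
  [seq w <- iota 0 10 | all2 (fun y x => (w \in y) == (v \in x)) s L].

Definition v9_forced (L : seq (seq nat)) :=
  all (fun s => has (fun v => nilp (candidates s L v)) (flatten L)
                || all (pred1 9) (candidates s L 9))
      (assignments meet_size edge_lists L).

Section Monomorphism.
Variables (e f : {set vert}) (phi : vert -> vert) (L : seq (seq nat)).
Hypothesis Hef_edgesE : Hef_edges e f = map edge_of L.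
Hypothesis L_edges : {subset L <= edge_lists}.
Hypothesis phi_mono : monomorphism e f phi.

Let V := Hef_vertices e f.

Lemma L_lt10 x : x \in L -> all (fun i => i < 10) x.
Proof. by move=> /L_edges; apply: (allP edge_lists_lt10). Qed.

Lemma edge_of_sub_V x : x \in L -> edge_of x \subset V.
Proof. by move=> x_L; apply: sub_Hef_vertices; rewrite Hef_edgesE map_f. Qed.

Lemma image_edgeP x :
  x \in L -> image_edge phi x \in edge_lists /\ edge_of (image_edge phi x) = phi @: edge_of x.
Proof.
move=> x_L; rewrite imset_edge_of ?L_lt10 //; apply: edge_repP.
by rewrite -imset_edge_of ?L_lt10 // phi_mono.2 // Hef_edgesE map_f.
Qed.

Lemma image_assignment : map (image_edge phi) L \in assignments meet_size edge_lists L.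
Proof.
apply: assignments_complete => [x /image_edgeP[] // | x y x_L y_L].
rewrite -!card_edge_ofI (image_edgeP x_L).2 (image_edgeP y_L).2.
by apply: (card_imsetI_in phi_mono.1); apply: edge_of_sub_V.
Qed.

Lemma idx_map_candidate v :
  v < 10 -> (inord v : vert) \in V ->
  idx_map phi v \in candidates (map (image_edge phi) L) L v.
Proof.
move=> lt_v10 v_V; rewrite mem_filter mem_iota leq0n [idx_map _ _ < _]ltn_ord !andbT.
rewrite all2_mapl; apply/allP => x x_L; rewrite -mem_edge_of ?ltn_ord // inord_val.
rewrite (image_edgeP x_L).2 (mem_imset_in phi_mono.1) ?edge_of_sub_V //.
by rewrite mem_edge_of.
Qed.

Lemma v9_forcedP : v9_forced L -> vx 9 \in V -> phi (vx 9) = vx 9.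
Proof.
move=> /allP/(_ _ image_assignment) + v9_V.
case/orP => [/hasP[v v_L /nilP no_candidate] | /allP v9_only].
  have [x x_L v_x] := flattenP v_L; have lt_v10 := allP (L_lt10 x_L) v v_x.
  have v_V : (inord v : vert) \in V.
    by apply: (subsetP (edge_of_sub_V x_L)); rewrite mem_edge_of.
  by have := idx_map_candidate lt_v10 v_V; rewrite no_candidate.
have /eqP := v9_only _ (idx_map_candidate (isT : 9 < 10) v9_V).
by move=> phi_v9; apply: val_inj; rewrite [LHS]phi_v9 /= inordK.
Qed.

End Monomorphism.

Definition remaining (le lf : seq nat) :=
  [seq l <- edge_lists | ~~ same_edge l le && ~~ same_edge l lf].

Lemma Hef_edges_edge_of le lf :
  Hef_edges (edge_of le) (edge_of lf) = map edge_of (remaining le lf).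
Proof.
rewrite /Hef_edges H_edgesE filter_map; congr map; apply: eq_filter => l.
by rewrite /preim /= !eq_edge_of.
Qed.

Lemma v9_forced_remaining :
  all (fun le => all (fun lf =>
    [&& ~~ same_edge le lf, has (same_edge [:: 9; 1; 2; 3; 4]) (remaining le lf)
      & has (same_edge [:: 5; 6; 7; 8; 9]) (remaining le lf)]
    ==> v9_forced (remaining le lf)) edge_lists) edge_lists.
Proof. by vm_compute. Qed.

Theorem lemma4p7 (e f : {set vert}) (phi : vert -> vert) :
  e \in H_edges -> f \in H_edges -> e != f ->
  b_edge \in Hef_edges e f -> e_edge 5 \in Hef_edges e f ->
  monomorphism e f phi ->
  phi (vx 9) = vx 9.
Proof.
rewrite !H_edgesE => /mapP[le le_H ->] /mapP[lf lf_H ->] ne_ef b_Hef e5_Hef mono.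
have v9_V : vx 9 \in Hef_vertices (edge_of le) (edge_of lf).
  by apply: (subsetP (sub_Hef_vertices b_Hef)); rewrite /vx mem_edge_of.
change b_edge with (edge_of [:: 9; 1; 2; 3; 4]) in b_Hef.
change (e_edge 5) with (edge_of [:: 5; 6; 7; 8; 9]) in e5_Hef.
rewrite !Hef_edges_edge_of !mem_map_edge_of in b_Hef e5_Hef.
have := allP (allP v9_forced_remaining le le_H) lf lf_H.
rewrite -eq_edge_of ne_ef b_Hef e5_Hef => /= forced.
apply: v9_forcedP (Hef_edges_edge_of le lf) _ mono forced v9_V.
by move=> l; rewrite mem_filter => /andP[].
Qed.
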